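(* The message-passing axiom fails for $TS_{PP}$ (and hence for PSO): let $x\neq y$ be global variables, $t=1$, $t'=2$ two distinct threads, $a_w=wr(y,1)$, $a_r=rd(y,r_1,1)$, $b=wr(x,1)$ (so $\mathit{var}(a_w)=\mathit{var}(a_r)\neq\mathit{var}(b)$, $wrval(a_w)=rdval(a_r)$). Then $$\mathit{vmax}_{PP}(t,b)\cap\mathrm{wlp}(T_{PP}(t',a_r),\mathit{vmax}_{PP}(t',b))\not\subseteq\mathrm{wlp}(T_{PP}(t,a_w),\mathrm{wlp}(T_{PP}(t',a_r),\mathit{vmax}_{PP}(t',b))).$$ In particular the axiom MP — for all $a_w,a_r,b$ and $t\neq t'$ with $(a_w,a_r)\in sync$, $\mathit{var}(a_w)=\mathit{var}(a_r)\neq\mathit{var}(b)$, $wrval(a_w)=rdval(a_r)$: $\mathit{vmax}(t,b)\cap\mathrm{wlp}(T(t',a_r),\mathit{vmax}(t',b))\subseteq\mathrm{wlp}(T(t,a_w),\mathrm{wlp}(T(t',a_r),\mathit{vmax}(t',b)))$ — does not hold for any relation $sync$ containing the pair $(wr(y,1),rd(y,r_1,1))$.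
   Context: PPSO: threads $\mathsf{Tid}$, global variables $\mathsf{Var_G}$, values $\mathsf{Val}$ (containing $0,1$). States $\sigma=(s,wb)$ with $s:\mathsf{Var_G}\to\mathsf{Val}$ and $wb:(\mathsf{Tid}\times\mathsf{Var_G})\to(\mathsf{Val}\times\mathbb{Q})^*$; entries $(v,q)$, timestamp $ts(v,q)=q$. $val_\sigma(t,x)$: value of the last entry of $wb^{t,x}$ if nonempty, else $s(x)$. Steps: $rd(x,r,v)$ by $t$ leaves $\sigma$ unchanged, requires $v=val_\sigma(t,x)$; $fence$ by $t$ leaves $\sigma$ unchanged, requires all $wb^{t,x}$ empty; $wr(x,v)$ by $t$ appends $(v,q)$ to $wb^{t,x}$ for a $q$ occurring in no buffer and exceeding all timestamps in $wb^{t,x}$; a flush by $t$ removes the first entry $(v,q)$ of some $wb^{t,x}$ and sets $s(x):=v$, allowed only if all entries of all other buffers $wb^{t',x'}$, $(t',x')\neq(t,x)$, have timestamps $>q$. $T_{PP}(t,a)$ = any finite sequence of flushes (by any threads) followed by the step of $a$ by $t$. $\mathrm{wlp}(R,P)=\{\sigma\mid\forall\sigma':(\sigma,\sigma')\in R\Rightarrow\sigma'\in P\}$. $maxTS(t,x)=\{\sigma\mid\sigma.wb^{t,x}\neq\langle\rangle\wedge\forall t',q:((\cdot,q)\in\sigma.wb^{t',x}\Rightarrow ts(last(\sigma.wb^{t,x}))\geq q)\}\cup\{\sigma\mid\forall t':\sigma.wb^{t',x}=\langle\rangle\}$; $\mathit{vmax}_{PP}(t,a)=maxTS(t,\mathit{var}(a))$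 for reads and writes $a$, and $\Sigma_{PP}$ for $a=fence$. $\mathit{var}$, $wrval$, $rdval$ give the variable, written value, read value of an action. *)

From Stdlib Require List.
From mathcomp Require Import all_boot all_order all_algebra.

Set Implicit Arguments. Unset Strict Implicit. Unset Printing Implicit Defensive.
Import Order.TTheory GRing.Theory Num.Theory.
Local Open Scope ring_scope.

Section PPSO.
Variables (Tid Var Val Reg : Type).

Definition wbentry := (Val * rat)%type.
Definition ts (e : wbentry) : rat := e.2.

Record state := State {
  st_s  : Var -> Val;
  st_wb : Tid -> Var -> seq wbentry }.

Inductive action :=
| wr of Var & Val
| rd of Var & Reg & Val
| fence.

Definition var (a : action) : option Var :=
  match a with wr x _ => Some x | rd x _ _ => Some x | fence => None end.
Definition wrval (a : action) : option Val :=
  match a with wr _ v => Some v | _ => None end.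
Definition rdval (a : action) : option Val :=
  match a with rd _ _ v => Some v | _ => None end.

Definition val_of (σ : state) (t : Tid) (x : Var) : Val :=
  match st_wb σ t x with
  | [::] => st_s σ x
  | e :: l => (last e l).1
  end.

Definition step (t : Tid) (a : action) (σ σ' : state) : Prop :=
  match a with
  | rd x _ v => σ' = σ /\ v = val_of σ t x
  | fence => σ' = σ /\ (forall x, st_wb σ t x = [::])
  | wr x v => exists q : rat,
      (forall t2 x2 e, List.In e (st_wb σ t2 x2) -> ts e <> q) /\
      (forall e, List.In e (st_wb σ t x) -> ts e < q) /\
      st_s σ' = st_s σ /\
      st_wb σ' t x = rcons (st_wb σ t x) (v, q) /\
      (forall t2 x2, (t2, x2) <> (t, x) -> st_wb σ' t2 x2 = st_wb σ t2 x2)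
  end.

Definition flush_by (t : Tid) (σ σ' : state) : Prop :=
  exists (x : Var) (v : Val) (q : rat) (rest : seq wbentry),
    st_wb σ t x = (v, q) :: rest /\
    (forall t2 x2, (t2, x2) <> (t, x) ->
       forall e, List.In e (st_wb σ t2 x2) -> q < ts e) /\
    st_wb σ' t x = rest /\
    (forall t2 x2, (t2, x2) <> (t, x) -> st_wb σ' t2 x2 = st_wb σ t2 x2) /\
    st_s σ' x = v /\
    (forall y, y <> x -> st_s σ' y = st_s σ y).

Definition flush (σ σ' : state) : Prop := exists t, flush_by t σ σ'.

Inductive flushes : state -> state -> Prop :=
| flushes_refl σ : flushes σ σ
| flushes_step σ σ1 σ' : flush σ σ1 -> flushes σ1 σ' -> flushes σ σ'.

Definition T_PP (t : Tid) (a : action) (σ σ'' : state) : Prop :=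
  exists σ', flushes σ σ' /\ step t a σ' σ''.

Definition wlp (R : state -> state -> Prop) (P : state -> Prop) : state -> Prop :=
  fun σ => forall σ', R σ σ' -> P σ'.

Definition maxTS (t : Tid) (x : Var) (σ : state) : Prop :=
  (exists e l, st_wb σ t x = e :: l /\
     forall t' f, List.In f (st_wb σ t' x) -> ts f <= ts (last e l))
  \/ (forall t', st_wb σ t' x = [::]).

Definition vmax_PP (t : Tid) (a : action) : state -> Prop :=
  match a with
  | wr x _ | rd x _ _ => maxTS t x
  | fence => fun _ => True
  end.

Definition MP (sync : action -> action -> Prop) : Prop :=
  forall (aw ar b : action) (t t' : Tid), t <> t' -> sync aw ar ->
    (exists z w, var aw = Some z /\ var ar = Some z /\ var b = Some w /\ z <> w) ->
    (exists v, wrval aw = Some v /\ rdval ar = Some v) ->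
    forall σ, vmax_PP t b σ -> wlp (T_PP t' ar) (vmax_PP t' b) σ ->
      wlp (T_PP t aw) (wlp (T_PP t' ar) (vmax_PP t' b)) σ.

End PPSO.

From mathcomp Require Import all_boot all_order all_algebra.
From Stdlib Require Import ClassicalEpsilon.
Import Order.TTheory GRing.Theory Num.Theory.
Set Implicit Arguments. Unset Strict Implicit. Unset Printing Implicit Defensive.
Local Open Scope ring_scope.

(* Counterexample state σ0: memory holds [zero] everywhere and the only
   non-empty buffer is thread t's buffer for x, holding (one, 0).
   - vmax(t, wr x) holds in σ0: t owns the only x-entry.
   - wlp(T(t', rd y one), vmax(t', wr x)) holds vacuously in σ0: flushes never
     touch y (no y-buffers exist), so y reads [zero] and the read of [one]
     cannot happen.
   - But t may write y with the small timestamp -1, that entry may be flushed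
     ahead of the x-entry (timestamp 0), and then t' reads [one] from memory
     in a state where t still holds a pending x-entry and t' holds none, so
     vmax(t', wr x) fails. *)

Definition upd {A B : Type} (f : A -> B) (a0 : A) (b : B) : A -> B :=
  fun a => if excluded_middle_informative (a = a0) then b else f a.

Lemma upd_eq {A B : Type} (f : A -> B) a0 b : upd f a0 b a0 = b.
Proof. by rewrite /upd; case: excluded_middle_informative. Qed.

Lemma upd_neq {A B : Type} (f : A -> B) a0 b a : a <> a0 -> upd f a0 b a = f a.
Proof. by rewrite /upd; case: excluded_middle_informative. Qed.

Section TSPPSteps.
Variables (Tid Var Val Reg : Type).
Implicit Types (σ : state Tid Var Val) (u : Tid) (z : Var) (v : Val).

Definition set_buf (wb : Tid -> Var -> seq (wbentry Val)) u z l :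
    Tid -> Var -> seq (wbentry Val) :=
  fun u2 z2 => upd (fun p => wb p.1 p.2) (u, z) l (u2, z2).

Lemma set_buf_eq wb u z l : set_buf wb u z l u z = l.
Proof. exact: upd_eq. Qed.

Lemma set_buf_neq wb u z l u2 z2 :
  (u2, z2) <> (u, z) -> set_buf wb u z l u2 z2 = wb u2 z2.
Proof. exact: upd_neq. Qed.

Lemma step_wr_fresh u z v (q : rat) σ :
  (forall u2 z2 e, List.In e (st_wb σ u2 z2) -> q < ts e) ->
  st_wb σ u z = [::] ->
  step u (wr Reg z v) σ (State (st_s σ) (set_buf (st_wb σ) u z [:: (v, q)])).
Proof.
move=> below empty; exists q; split.
  by move=> u2 z2 e /below lt_q eq_q; rewrite eq_q ltxx in lt_q.
split; first by rewrite empty.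
split; first by [].
by split; [rewrite /= set_buf_eq empty | exact: set_buf_neq].
Qed.

Lemma flush_single u z v (q : rat) σ :
  st_wb σ u z = [:: (v, q)] ->
  (forall u2 z2, (u2, z2) <> (u, z) ->
     forall e, List.In e (st_wb σ u2 z2) -> q < ts e) ->
  flush σ (State (upd (st_s σ) z v) (set_buf (st_wb σ) u z [::])).
Proof.
move=> single below; exists u, z, v, q, [::]; split; first exact: single.
split; first exact: below.
split; first exact: set_buf_eq.
split; first by move=> u2 z2; exact: set_buf_neq.
by split; [exact: upd_eq | move=> w; exact: upd_neq].
Qed.

Lemma flushes_untouched z v σ σ' :
  flushes σ σ' -> st_s σ z = v -> (forall u, st_wb σ u z = [::]) ->
  st_s σ' z = v /\ (forall u, st_wb σ' u z = [::]).
Proof.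
elim=> [//|{}σ σ1 {}σ' [u [z' [v' [q [rest [head [_ [_ [others [_ mem]]]]]]]]]] _ IH]
  mem_z empty_z.
have neq_z : z <> z' by move=> eq_z; move: head; rewrite -eq_z empty_z.
apply: IH; first by rewrite mem.
by move=> u2; rewrite others ?empty_z //; case=> _.
Qed.

(* Hence a read of a value different from the memory value of such a
   variable can never be executed: its wlp holds for every postcondition. *)
Lemma unreadable u z (r : Reg) v P σ :
  st_s σ z <> v -> (forall u2, st_wb σ u2 z = [::]) ->
  wlp (T_PP u (rd z r v)) P σ.
Proof.
move=> neq_v empty_z σ'' [σ' [flushed [_ read]]].
have [mem_z empty'] := flushes_untouched flushed erefl empty_z.
by exfalso; apply: neq_v; rewrite read /val_of empty' mem_z.
Qed.

Lemma maxTS_single u z e σ :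
  st_wb σ u z = [:: e] ->
  (forall u2 f, List.In f (st_wb σ u2 z) -> ts f <= ts e) -> maxTS u z σ.
Proof. by move=> single bound; left; exists e, [::]. Qed.

Lemma not_maxTS u u' z σ :
  st_wb σ u' z = [::] -> st_wb σ u z <> [::] -> ~ maxTS u' z σ.
Proof. by move=> empty' pending [[e [l [nonempty _]]] | all_empty]; congruence. Qed.

End TSPPSteps.

Section Counterexample.
Variables (Tid Var Val Reg : Type) (x y : Var) (t t' : Tid) (zero one : Val)
  (r1 : Reg).
Hypotheses (neq_xy : x <> y) (neq_tt' : t <> t') (neq_01 : zero <> one).

Definition no_bufs : Tid -> Var -> seq (wbentry Val) := fun _ _ => [::].

Definition σ0 : state Tid Var Val :=
  State (fun _ => zero) (set_buf no_bufs t x [:: (one, 0%R)]).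

Definition σ1 : state Tid Var Val :=
  State (st_s σ0) (set_buf (st_wb σ0) t y [:: (one, (-1)%R)]).

Definition σ2 : state Tid Var Val :=
  State (upd (st_s σ0) y one) (set_buf (st_wb σ1) t y [::]).

Lemma σ0_ts u z e : List.In e (st_wb σ0 u z) -> ts e = 0%R.
Proof.
rewrite /= /set_buf /upd; case: excluded_middle_informative => //= _.
by case=> [<-|[]].
Qed.

Lemma σ0_no_y u : st_wb σ0 u y = [::].
Proof. by rewrite /= set_buf_neq //; case=> _ /esym. Qed.

Lemma σ0_vmax : vmax_PP t (wr Reg x one) σ0.
Proof.
apply: (maxTS_single (e := (one, 0%R))); first by rewrite /= set_buf_eq.
by move=> u f /σ0_ts ->.
Qed.

Lemma σ0_wlp : wlp (T_PP t' (rd y r1 one)) (vmax_PP t' (wr Reg x one)) σ0.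
Proof. by apply: unreadable; [exact: neq_01 | exact: σ0_no_y]. Qed.

Lemma σ0_to_σ1 : T_PP t (wr Reg y one) σ0 σ1.
Proof.
exists σ0; split; first exact: flushes_refl.
by apply: step_wr_fresh => [u z e /σ0_ts ->|]; rewrite ?σ0_no_y.
Qed.

Lemma σ1_to_σ2 : T_PP t' (rd y r1 one) σ1 σ2.
Proof.
have neq_t't : (t', y) <> (t, y) by case=> /esym.
exists σ2; split.
  apply: flushes_step; last exact: flushes_refl.
  apply: flush_single; first exact: set_buf_eq.
  by move=> u z neq e; rewrite /= set_buf_neq // => /σ0_ts ->.
split; first by [].
by rewrite /val_of /= !set_buf_neq ?upd_eq //; case=> /esym.
Qed.

(* In σ2 thread t still holds its x-entry while t' holds none. *)
Lemma σ2_not_vmax : ~ vmax_PP t' (wr Reg x one) σ2.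
Proof.
apply: (not_maxTS (u := t)).
  by rewrite /= !set_buf_neq //; congruence.
have neq_ty : (t, x) <> (t, y) by case.
by rewrite /= set_buf_neq // set_buf_neq // set_buf_eq.
Qed.

Lemma MP_inclusion_fails :
  ~ (forall σ : state Tid Var Val,
       vmax_PP t (wr Reg x one) σ ->
       wlp (T_PP t' (rd y r1 one)) (vmax_PP t' (wr Reg x one)) σ ->
       wlp (T_PP t (wr Reg y one))
           (wlp (T_PP t' (rd y r1 one)) (vmax_PP t' (wr Reg x one))) σ).
Proof.
move=> inclusion; apply: σ2_not_vmax.
exact: (inclusion σ0 σ0_vmax σ0_wlp σ1 σ0_to_σ1 σ2 σ1_to_σ2).
Qed.

End Counterexample.

Lemma MP_instance (Tid Var Val Reg : Type)
    (sync : action Var Val Reg -> action Var Val Reg -> Prop) (x y : Var) (t t' : Tid) (v w : Val) (r : Reg) :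
  x <> y -> t <> t' -> sync (wr Reg y v) (rd y r v) -> MP Tid sync ->
  forall σ : state Tid Var Val,
    vmax_PP t (wr Reg x w) σ ->
    wlp (T_PP t' (rd y r v)) (vmax_PP t' (wr Reg x w)) σ ->
    wlp (T_PP t (wr Reg y v)) (wlp (T_PP t' (rd y r v)) (vmax_PP t' (wr Reg x w))) σ.
Proof.
move=> neq_xy neq_tt' synced mp; apply: mp => //.
  by exists y, x; do !split => //; move=> /esym.
by exists v.
Qed.

Theorem mainTheorem5 (Tid Var Val Reg : Type) (x y : Var) (t t' : Tid)
  (zero one : Val) (r1 : Reg) :
  x <> y -> t <> t' -> zero <> one ->
  (~ (forall σ : state Tid Var Val,
        vmax_PP t (wr Reg x one) σ ->
        wlp (T_PP t' (rd y r1 one)) (vmax_PP t' (wr Reg x one)) σ ->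
        wlp (T_PP t (wr Reg y one))
            (wlp (T_PP t' (rd y r1 one)) (vmax_PP t' (wr Reg x one))) σ))
  /\ (forall sync : action Var Val Reg -> action Var Val Reg -> Prop,
        sync (wr Reg y one) (rd y r1 one) -> ~ MP Tid sync).
Proof.
move=> neq_xy neq_tt' neq_01.
have fails := MP_inclusion_fails neq_xy neq_tt' neq_01 (r1 := r1).
split=> // sync synced mp.
by apply: fails; exact: MP_instance neq_xy neq_tt' synced mp.
Qed.
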